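(* Let $r\ge 1$ and $m\ge 0$ be integers. Then for every integer $k\ge 0$, $$(-1)^{\binom{r}{2}}\det\left(\binom{k+i+j}{m+r-1}\right)_{i,j=0}^{r-1}=\left\langle \begin{matrix} k\\ m\end{matrix}\right\rangle_r .$$ Equivalently, the matrix $\left((-1)^{\binom r2}\det\left(\binom{k+i+j}{m+r-1}\right)_{i,j=0}^{r-1}\right)_{k,m\ge 0}$ equals the $r$-Hoggatt matrix $\left(\left\langle \begin{smallmatrix} k\\ m\end{smallmatrix}\right\rangle_r\right)_{k,m\ge0}$.
   Context: For an integer $x$ and integer $r>0$ the rising factorial is $x^{(r)}=x(x+1)\cdots(x+r-1)$, with $x^{(0)}=1$. For a positive integer $r$ and integers $n,k$ the $r$-Hoggatt binomial is defined by $$\left\langle \begin{matrix} n\\ k\end{matrix}\right\rangle_r=\prod_{j=1}^{k}\frac{(n-k+j)^{(r)}}{(j)^{(r)}}\quad\text{for }0\le k\le n,$$ (an empty product being $1$), and $\left\langle \begin{smallmatrix} n\\ k\end{smallmatrix}\right\rangle_r=0$ otherwise. Binomial coefficients $\binom{a}{b}$ for integers $a\ge0$, $b\ge 0$ are the usual ones (zero if $b>a$). *)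

From mathcomp Require Import all_boot all_order all_algebra.
Set Implicit Arguments. Unset Strict Implicit. Unset Printing Implicit Defensive.
Import Order.TTheory GRing.Theory Num.Theory.
Local Open Scope ring_scope.

Definition rising (x : int) (r : nat) : int := \prod_(i < r) (x + i%:Z).

Definition hoggatt (r : nat) (n k : int) : rat :=
  if (0 <= k) && (k <= n) then
    \prod_(1 <= j < `|k|%N.+1)
      ((rising (n - k + j%:Z) r)%:~R / (rising j%:Z r)%:~R)
  else 0.

Definition binom_mx (r k m : nat) : 'M[int]_r :=
  \matrix_(i < r, j < r) ('C(k + i + j, m + r - 1))%:Z.

From mathcomp Require Import all_boot all_order all_algebra.
From mathcomp Require Import ring zify.
Set Implicit Arguments. Unset Strict Implicit. Unset Printing Implicit Defensive.
Import GRing.Theory Num.Theory.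
Local Open Scope ring_scope.

(* Over a field of characteristic 0 the entries C(k+i+j, m+r-1) are polynomial
   binomials C(x, n), and Vandermonde's convolution C(x + i, n) =
   sum_p C(i, p) C(x, n - p) factors the Hankel matrix as P N, with P the
   unitriangular Pascal matrix and N = (C(k + j, m + r-1 - p))_{p,j}.  Since
   C(x, m + n) = (x)_m C(x - m, n) n!/(m+n)!, scaling the rows and columns of N
   leaves (C(k - m + j, r-1 - p))_{p,j}, which a second convolution factors as
   Q P^T with Q zero below its antidiagonal and one on it, so det Q = (-1)^C(r,2).
   The scaling factors multiply to prod_t (k+t)_m t!/(m+t)!, the Hoggatt binomial. *)

Section FallingFactorial.

Variable R : comNzRingType.
Implicit Types (x z : R) (m n : nat).

Definition ffactr x n : R := \prod_(t < n) (x - t%:R).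

Lemma ffactr0 x : ffactr x 0 = 1.
Proof. by rewrite /ffactr big_ord0. Qed.

Lemma ffactrS x n : ffactr x n.+1 = x * ffactr (x - 1) n.
Proof.
rewrite /ffactr big_ord_recl /= subr0; congr (_ * _); apply: eq_bigr => i _.
by rewrite /bump /= -addn1 natrD; ring.
Qed.

Lemma ffactrSr x n : ffactr x n.+1 = ffactr x n * (x - n%:R).
Proof. by rewrite /ffactr big_ord_recr. Qed.

Lemma ffactrD x m n : ffactr x (m + n) = ffactr x m * ffactr (x - m%:R) n.
Proof.
rewrite /ffactr big_split_ord /=; congr (_ * _); apply: eq_bigr => i _.
by rewrite natrD; ring.
Qed.

Lemma ffactr_nat a n : ffactr a%:R n = (a ^_ n)%:R.
Proof.
elim: n a => [|n IHn] a; first by rewrite ffactr0 ffactn0.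
case: a => [|a]; first by rewrite ffactrS mul0r.
by rewrite ffactrS -natr1 addrK IHn ffactnS natrM natr1.
Qed.

Lemma prod_ffactr z m : \prod_(1 <= j < m.+1) (z - m%:R + j%:R) = ffactr z m.
Proof.
elim: m => [|m IHm]; first by rewrite big_geq // ffactr0.
rewrite big_nat_recl // ffactrSr -IHm mulrC; congr (_ * _).
  by apply: eq_bigr => j _; rewrite -!natr1; ring.
by rewrite -natr1; ring.
Qed.

End FallingFactorial.

Section GeneralizedBinomial.

Variable R : numFieldType.
Implicit Types (x z : R) (m n p : nat).

Definition binr x n : R := ffactr x n / n`!%:R.

(* C(x, n - p) with an honest, not truncated, lower index: 0 when p > n. *)
Definition binrB x n p : R := if (p <= n)%N then binr x (n - p) else 0.

Lemma natr_fact_neq0 n : n`!%:R != 0 :> R.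
Proof. by rewrite pnatr_eq0 -lt0n fact_gt0. Qed.

Lemma binr0 x : binr x 0 = 1.
Proof. by rewrite /binr ffactr0 divr1. Qed.

Lemma binr_nat a n : binr a%:R n = 'C(a, n)%:R.
Proof. by rewrite /binr ffactr_nat -bin_ffact natrM mulfK ?natr_fact_neq0. Qed.

Lemma binrS x n : binr (x + 1) n.+1 = binr x n.+1 + binr x n.
Proof.
rewrite /binr ffactrS addrK ffactrSr factS natrM -natr1.
have : n%:R + 1 != 0 :> R by rewrite natr1 pnatr_eq0.
by move=> nz_n1; field; rewrite nz_n1 natr_fact_neq0.
Qed.

Lemma binrBS x n p : binrB (x + 1) n p = binrB x n p + binrB x n p.+1.
Proof.
rewrite /binrB; case: ltngtP => [lt_pn|lt_np|->].
- by rewrite -(subnSK lt_pn) binrS.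
- by rewrite addr0.
- by rewrite subnn !binr0 addr0.
Qed.

Lemma binr_Vandermonde z i n :
  binr (z + i%:R) n = \sum_(p < i.+1) 'C(i, p)%:R * binrB z n p.
Proof.
elim: i z => [|i IHi] z.
  by rewrite big_ord1 addr0 bin0 mul1r /binrB leq0n subn0.
rewrite -natr1 addrA addrAC IHi.
under eq_bigr => p _ do rewrite binrBS mulrDr.
rewrite big_split /= [RHS]big_ord_recl bin0 mul1r.
under [in RHS]eq_bigr => p _ do rewrite lift0 binS natrD mulrDl.
rewrite big_split /= addrA; congr (_ + _).
rewrite big_ord_recl bin0 mul1r; congr (_ + _).
by rewrite [RHS]big_ord_recr /= bin_small // mul0r addr0.
Qed.

Lemma binr_Vandermonde_ord N z i n : (i < N)%N ->
  binr (z + i%:R) n = \sum_(p < N) 'C(i, p)%:R * binrB z n p.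
Proof.
move=> lt_iN; rewrite binr_Vandermonde.
rewrite (big_ord_widen N (fun p => 'C(i, p)%:R * binrB z n p) lt_iN) big_mkcond /=.
by apply: eq_bigr => p _; case: ltnP => // ?; rewrite bin_small // mul0r.
Qed.

Lemma binrD_ffactr x m n :
  binr x (m + n) = n`!%:R / (m + n)`!%:R * binr (x - m%:R) n * ffactr x m.
Proof.
by rewrite /binr ffactrD; field; rewrite !natr_fact_neq0.
Qed.

Lemma prod_natD_fact m t :
  \prod_(1 <= j < m.+1) (j%:R + t%:R) = (m + t)`!%:R / t`!%:R :> R.
Proof.
elim: m => [|m IHm]; first by rewrite big_geq // add0n divff ?natr_fact_neq0.
by rewrite big_nat_recr //= IHm addSn factS natrM -natrD addSn mulrC mulrA.
Qed.

End GeneralizedBinomial.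

Section PascalDeterminants.

Variable R : comNzRingType.

Definition pascal_mx n : 'M[R]_n := \matrix_(i, j) 'C(i, j)%:R.

Lemma det_pascal_mx n : \det (pascal_mx n) = 1.
Proof.
rewrite det_trig; last by apply/is_trig_mxP => i j lt_ij; rewrite mxE bin_small.
by apply: big1 => i _; rewrite mxE binn.
Qed.

Lemma det_antiunitrig n (A : 'M[R]_n) :
  (forall i j : 'I_n, (n <= i + j)%N -> A i j = 0) ->
  (forall i j : 'I_n, (i + j)%N = n.-1 -> A i j = 1) ->
  \det A = (-1) ^+ 'C(n, 2).
Proof.
elim: n A => [|n IHn] A A0 A1; first by rewrite det_mx00.
rewrite (expand_det_row A ord_max) (bigD1 ord0) //= big1 ?addr0; last first.
  move=> j nz_j; rewrite A0 ?mul0r //= -[X in (X <= _)%N]addn1 leq_add2l lt0n.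
  exact: nz_j.
rewrite A1 /= ?addn0 // mul1r /cofactor addn0 IHn.
- by rewrite binS bin1 exprD mulrC.
- by move=> i j ij_n; rewrite !mxE A0 // lift_max lift0 addnS ltnS.
move=> i j ij_n; rewrite !mxE A1 // lift_max lift0 addnS ij_n.
by case: n i {IHn A0 A1 A j ij_n} => [[]|].
Qed.

End PascalDeterminants.

Section BinomialHankelDeterminant.

Variable R : numFieldType.
Implicit Types (x z : R) (k m n : nat).

Lemma binom_mx_pascal k m n :
  map_mx intr (binom_mx n.+1 k m) =
  pascal_mx R n.+1 *m \matrix_(p, j) binr (k%:R + j%:R) (m + n - p).
Proof.
apply/matrixP => i j; rewrite !mxE -pmulrn addnS subSS subn0 -binr_nat !natrD.
rewrite -addrA [_ + j%:R]addrC addrA (binr_Vandermonde_ord _ _ (ltn_ord i)).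
apply: eq_bigr => p _; rewrite !mxE /binrB ifT //.
by rewrite (leq_trans _ (leq_addl m n)) // -ltnS.
Qed.

Lemma binr_shift_mx x m n :
  (\matrix_(p, j) binr (x + j%:R) (m + n - p) : 'M[R]_n.+1) =
  diag_mx (\row_p ((n - p)`!%:R / (m + n - p)`!%:R)) *m
  \matrix_(p, j) binr (x - m%:R + j%:R) (n - p) *m
  diag_mx (\row_j ffactr (x + j%:R) m).
Proof.
apply/matrixP => p j; rewrite mul_mx_diag mul_diag_mx !mxE.
by rewrite -addnBA -1?ltnS // binrD_ffactr addrAC.
Qed.

Lemma binr_rev_mx z n :
  (\matrix_(p, j) binr (z + j%:R) (n - p) : 'M[R]_n.+1) =
  \matrix_(p, q) binrB z (n - p) q *m (pascal_mx R n.+1)^T.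
Proof.
apply/matrixP => p j; rewrite !mxE (binr_Vandermonde_ord _ _ (ltn_ord j)).
by apply: eq_bigr => q _; rewrite !mxE mulrC.
Qed.

Lemma det_binrB_mx z n :
  \det (\matrix_(p, q) binrB z (n - p) q : 'M[R]_n.+1) = (-1) ^+ 'C(n.+1, 2).
Proof.
apply: det_antiunitrig => p q; rewrite mxE /binrB;
  have := ltn_ord p; have := ltn_ord q => lt_qn lt_pn.
  by case: ifP => // ?; lia.
move=> /= pq_n; have -> : (q <= n - p)%N by lia.
have -> : (n - p - q = 0)%N by lia.
exact: binr0.
Qed.

Lemma det_binom_mx k m n :
  \det (map_mx intr (binom_mx n.+1 k m) : 'M[R]_n.+1) =
  (-1) ^+ 'C(n.+1, 2) *
  \prod_(t < n.+1) (ffactr (k%:R + t%:R) m * t`!%:R / (m + t)`!%:R).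
Proof.
rewrite binom_mx_pascal det_mulmx det_pascal_mx mul1r binr_shift_mx.
rewrite !det_mulmx !det_diag binr_rev_mx det_mulmx det_tr det_pascal_mx.
rewrite mulr1 det_binrB_mx mulrAC mulrC (reindex_inj rev_ord_inj) -big_split.
congr (_ * _); apply: eq_bigr => t _; rewrite !mxE /= subSS.
have le_tn : (t <= n)%N by rewrite -ltnS.
by rewrite subKn // -addnBA ?leq_subr // subKn // mulrC mulrA.
Qed.

End BinomialHankelDeterminant.

Lemma hoggatt_ffactr r k m : (m <= k)%N ->
  hoggatt r k%:Z m%:Z =
  \prod_(t < r) (ffactr (k%:R + t%:R) m * t`!%:R / (m + t)`!%:R).
Proof.
move=> le_mk; rewrite /hoggatt lez_nat le_mk /= prodf_div /rising.
under eq_bigr do rewrite rmorph_prod.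
under [X in _ / X]eq_bigr do rewrite rmorph_prod.
rewrite exchange_big [X in _ / X]exchange_big -prodf_div /=.
apply: eq_bigr => t _.
rewrite -[RHS]mulrA -[in RHS]invf_div -prod_ffactr -prod_natD_fact.
by congr (_ / _); apply: eq_bigr => j _; rewrite !rmorphD //= rmorphN /=; ring.
Qed.

Theorem theorem1 (r m k : nat) (hr : (1 <= r)%N) :
  (((-1) ^+ 'C(r, 2) * \det (binom_mx r k m))%:~R : rat)
  = hoggatt r k%:Z m%:Z.
Proof.
case: r hr => [//|n] _.
rewrite rmorphM rmorphXn rmorphN1 -det_map_mx det_binom_mx mulrA -exprD.
rewrite -signr_odd oddD addbb mul1r.
have [le_mk|lt_km] := leqP m k; first by rewrite hoggatt_ffactr.
rewrite /hoggatt lez_nat leqNgt lt_km /= big_ord_recl addr0 ffactr_nat.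
by rewrite ffact_small // !mul0r.
Qed.
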